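(* Let $A\in \mathbb{R}^{m\times n}$ be such that $A^{\dagger}\geq 0$. Let $A=P_{1}-R_{1}+S_{1}$ be a regular proper double splitting of $A$ such that $P_{1}P_{1}^{\dagger}\geq 0$, and let $A=P_{2}-R_{2}+S_{2}$ be a weak regular proper double splitting of $A$. Define $$W_{1}=\begin{pmatrix} P_{1}^{\dagger}R_{1} & -P_{1}^{\dagger}S_{1}\\ I & 0\end{pmatrix},\qquad W_{2}=\begin{pmatrix} P_{2}^{\dagger}R_{2} & -P_{2}^{\dagger}S_{2}\\ I & 0\end{pmatrix}\in\mathbb{R}^{2n\times 2n},$$ where $I$ is the $n\times n$ identity matrix. If $P_{1}^{\dagger}\geq P_{2}^{\dagger}$ and at least one of the conditions (i) $P_{1}^{\dagger}R_{1}\geq P_{2}^{\dagger}R_{2}$, (ii) $P_{1}^{\dagger}S_{1}\geq P_{2}^{\dagger}S_{2}$ holds, then $\rho(W_{1})\leq \rho(W_{2})< 1$.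
   Context: $A^{\dagger}$ denotes the Moore–Penrose inverse of $A$. For real matrices, $B\geq 0$ means all entries of $B$ are nonnegative, and $B\geq C$ means $B-C\geq 0$. $\rho(\cdot)$ denotes the spectral radius. For $A\in\mathbb{R}^{m\times n}$, a decomposition $A=P-R+S$ with $P,R,S\in\mathbb{R}^{m\times n}$ is a proper double splitting if $\mathcal{R}(A)=\mathcal{R}(P)$ and $\mathcal{N}(A)=\mathcal{N}(P)$ (range and null space). A proper double splitting is called regular if $P^{\dagger}\geq 0$, $R\geq 0$ and $-S\geq 0$; it is called weak regular if $P^{\dagger}\geq 0$, $P^{\dagger}R\geq 0$ and $-P^{\dagger}S\geq 0$. *)

From HB Require Import structures.
From mathcomp Require Import all_boot all_order all_algebra.
From mathcomp Require Import reals.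
From mathcomp Require Import complex.
Set Implicit Arguments. Unset Strict Implicit. Unset Printing Implicit Defensive.
Import Order.TTheory GRing.Theory Num.Theory.
Local Open Scope ring_scope.

Section Defs.
Variable R : realType.

Definition mx_nonneg m n (B : 'M[R]_(m, n)) : Prop := forall i j, 0 <= B i j.

(* X is the Moore-Penrose inverse of A (Penrose equations; real case, so
   conjugate transpose = transpose) *)
Definition is_MP_inverse m n (A : 'M[R]_(m, n)) (X : 'M[R]_(n, m)) : Prop :=
  [/\ A *m X *m A = A, X *m A *m X = X,
      (A *m X)^T = A *m X & (X *m A)^T = X *m A].

Definition same_range m n (A P : 'M[R]_(m, n)) : Prop :=
  forall y : 'cV[R]_m, (exists x : 'cV[R]_n, y = A *m x) <-> (exists x : 'cV[R]_n, y = P *m x).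

Definition same_null m n (A P : 'M[R]_(m, n)) : Prop :=
  forall x : 'cV[R]_n, A *m x = 0 <-> P *m x = 0.

Definition proper_double_splitting m n (A P Rm S : 'M[R]_(m, n)) : Prop :=
  [/\ A = P - Rm + S, same_range A P & same_null A P].

(* complex eigenvalues (with multiplicity) of a real square matrix:
   the roots in R[i] of its characteristic polynomial *)
Definition eigenvalues_C n (M : 'M[R]_n) : seq R[i] :=
  sval (closed_field_poly_normal (char_poly (map_mx (fun x : R => x%:C%C) M))).

(* spectral radius: maximum modulus (real part of the complex norm, which is real) of the complex eigenvalues (0 if n = 0) *)
Definition spectral_radius n (M : 'M[R]_n) : R :=
  \big[Num.max/0]_(z <- eigenvalues_C M) complex.Re `|z|.

End Defs.

From HB Require Import structures.
From mathcomp Require Import all_boot all_order all_algebra.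
From mathcomp Require Import reals complex polyrcf.
From mathcomp.algebra_tactics Require Import ring lra.
Set Implicit Arguments. Unset Strict Implicit. Unset Printing Implicit Defensive.
Import Order.TTheory GRing.Theory Num.Theory.
Local Open Scope ring_scope.

(* Both iteration matrices are nonnegative block companion matrices
   [W = [X Y; 1 0]] with [X + Y = P^+ (R - S) = (A^+ - P^+) A].
   Convergence: an eigenvalue of modulus [>= 1] gives, via the moduli of a
   left eigenvector, a row [w >= 0] with [w (X + Y) >= w]; multiplying by
   [A^+ >= 0] and using [A^+ - (X + Y) A^+ = P^+ >= 0] forces [w P^+ = 0],
   hence [w = 0].
   Comparison: by Perron-Frobenius, which follows from the nonnegativity of the
   resolvent, [W1] has an eigenvector [(r v, v) >= 0] for [r = rho(W1)].  As
   [P1 P1^+ >= 0], [R1 >= 0] and [S1 <= 0], it satisfies [A v >= 0], so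
   [(X2 + Y2 - X1 - Y1) v = (P1^+ - P2^+) A v >= 0]; with (i) or (ii) and
   [r <= 1] this gives [W2 (r v, v) >= r (r v, v)], and the Collatz-Wielandt
   bound yields [r <= rho(W2)]. *)

Section NonnegativeMatrices.
Variable R : realType.
Implicit Types m n p : nat.

Lemma mx_nonneg0 m n : mx_nonneg (0 : 'M[R]_(m, n)).
Proof. by move=> i j; rewrite mxE. Qed.

Lemma mx_nonneg1 n : mx_nonneg (1%:M : 'M[R]_n).
Proof. by move=> i j; rewrite mxE ler0n. Qed.

Lemma mx_nonnegD m n (A B : 'M[R]_(m, n)) :
  mx_nonneg A -> mx_nonneg B -> mx_nonneg (A + B).
Proof. by move=> A0 B0 i j; rewrite mxE addr_ge0. Qed.

Lemma mx_nonnegZ m n a (A : 'M[R]_(m, n)) :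
  0 <= a -> mx_nonneg A -> mx_nonneg (a *: A).
Proof. by move=> a0 A0 i j; rewrite mxE mulr_ge0. Qed.

Lemma mx_nonnegM m n p (A : 'M[R]_(m, n)) (B : 'M[R]_(n, p)) :
  mx_nonneg A -> mx_nonneg B -> mx_nonneg (A *m B).
Proof. by move=> A0 B0 i j; rewrite mxE sumr_ge0 // => l _; rewrite mulr_ge0. Qed.

Lemma mx_nonneg_block m1 m2 n1 n2 (A : 'M[R]_(m1, n1)) (B : 'M[R]_(m1, n2))
    (C : 'M[R]_(m2, n1)) (D : 'M[R]_(m2, n2)) :
  mx_nonneg A -> mx_nonneg B -> mx_nonneg C -> mx_nonneg D ->
  mx_nonneg (block_mx A B C D).
Proof.
move=> A0 B0 C0 D0 i j.
by case: (split_ordP i) => k ->; case: (split_ordP j) => l ->;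
  rewrite ?block_mxEul ?block_mxEur ?block_mxEdl ?block_mxEdr.
Qed.

Lemma mx_nonneg_row_mx m n1 n2 (A : 'M[R]_(m, n1)) (B : 'M[R]_(m, n2)) :
  mx_nonneg (row_mx A B) <-> mx_nonneg A /\ mx_nonneg B.
Proof.
split=> [AB0|[A0 B0] i j]; last by case: (split_ordP j) => k ->; rewrite ?row_mxEl ?row_mxEr.
by split=> i j; [rewrite -(row_mxEl A B) | rewrite -(row_mxEr A B)].
Qed.

Lemma mx_nonneg_col_mx m1 m2 n (A : 'M[R]_(m1, n)) (B : 'M[R]_(m2, n)) :
  mx_nonneg (col_mx A B) <-> mx_nonneg A /\ mx_nonneg B.
Proof.
split=> [AB0|[A0 B0] i j]; last by case: (split_ordP i) => k ->; rewrite ?col_mxEu ?col_mxEd.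
by split=> i j; [rewrite -(col_mxEu A B) | rewrite -(col_mxEd A B)].
Qed.

Lemma mx_nonneg_subZ m n (A B : 'M[R]_(m, n)) c :
  mx_nonneg B -> 1 <= c -> mx_nonneg (A - c *: B) -> mx_nonneg (A - B).
Proof.
move=> B0 c_ge1 AcB0; have -> : A - B = (A - c *: B) + (c - 1) *: B.
  by apply/matrixP => i j; rewrite !mxE; ring.
by apply: mx_nonnegD => //; apply: mx_nonnegZ; rewrite // subr_ge0.
Qed.

Lemma mx_nonneg_antisym m n (A : 'M[R]_(m, n)) :
  mx_nonneg A -> mx_nonneg (- A) -> A = 0.
Proof.
move=> A0 NA0; apply/matrixP => i j; apply/le_anti.
by have := NA0 i j; rewrite !mxE oppr_ge0 A0 => ->.
Qed.

(* Minimal-entry argument: a negative minimal entry [x] of [X] would satisfy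
   [x >= x * s] for a column sum [s < 1] of [M]. *)
Lemma mx_nonneg_fixpoint n (M X : 'M[R]_n) :
  mx_nonneg M -> (forall j, \sum_i M i j < 1) -> X = 1%:M + X *m M ->
  mx_nonneg X.
Proof.
move=> M0 Msum eqX i j; rewrite leNgt; apply/negP => Xij_lt0.
have [[i0 j0] _ Xmin] := arg_minP (fun k : 'I_n * 'I_n => X k.1 k.2) (isT : xpredT (i, j)).
set x := X i0 j0 in Xmin.
have x_lt0 : x < 0 := le_lt_trans (Xmin (i, j) isT) Xij_lt0.
have : x * \sum_l M l j0 <= x.
  rewrite {2}/x eqX !mxE mulr_sumr ler_wpDl ?ler0n //.
  by apply: ler_sum => l _; rewrite ler_wpM2r // (Xmin (i0, l)).
have := Msum j0; nra.
Qed.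

End NonnegativeMatrices.

Section SpectralRadius.
Variable R : realType.
Local Notation mxC M := (map_mx (fun x : R => x%:C%C) M).
Local Notation modulus z := (complex.Re `|z|).

Lemma normc_modulus (z : R[i]) : `|z| = (modulus z)%:C%C.
Proof. by rewrite normc_def. Qed.

Lemma modulus_ge0 (z : R[i]) : 0 <= modulus z.
Proof. by rewrite -ler0c -normc_modulus. Qed.

Lemma normc_real (a : R) : `|a%:C%C| = `|a|%:C%C :> R[i].
Proof.
have [a0|a0] := leP 0 a; first by rewrite !ger0_norm // ler0c.
by rewrite !ltr0_norm ?ltcR // rmorphN.
Qed.

Lemma char_poly_mxC n (M : 'M[R]_n) :
  char_poly (mxC M) = \prod_(z <- eigenvalues_C M) ('X - z%:P).
Proof.
rewrite /eigenvalues_C; case: closed_field_poly_normal => s /= ->.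
by rewrite (monicP (char_poly_monic _)) scale1r.
Qed.

Lemma size_eigenvalues_C n (M : 'M[R]_n) : size (eigenvalues_C M) = n.
Proof.
have := size_char_poly (mxC M).
by rewrite char_poly_mxC size_prod_XsubC => -[].
Qed.

Lemma eigenvalues_CP n (M : 'M[R]_n) z :
  reflect (exists2 v : 'rV_n, v *m mxC M = z *: v & v != 0)
          (z \in eigenvalues_C M).
Proof.
rewrite -root_prod_XsubC -char_poly_mxC -eigenvalue_root_char.
exact: eigenvalueP.
Qed.

Lemma spectral_radius_ge0 n (M : 'M[R]_n) : 0 <= spectral_radius M.
Proof. exact: bigmax_ge_id. Qed.

Lemma modulus_le_spectral_radius n (M : 'M[R]_n) z :
  z \in eigenvalues_C M -> modulus z <= spectral_radius M.
Proof. by move=> z_eig; apply: (le_bigmax_seq _ _ xpredT _ z_eig). Qed.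

Lemma spectral_radius_lt n (M : 'M[R]_n) s : 0 < s ->
  (forall z, z \in eigenvalues_C M -> modulus z < s) -> spectral_radius M < s.
Proof. by move=> s_gt0 lt_s; rewrite /spectral_radius big_seq; apply: bigmax_lt. Qed.

Lemma spectral_radius_attained n (M : 'M[R]_n) : 0 < spectral_radius M ->
  exists2 z, z \in eigenvalues_C M & modulus z = spectral_radius M.
Proof.
rewrite /spectral_radius; elim: (eigenvalues_C M) => [|y s IH].
  by rewrite big_nil ltxx.
rewrite big_cons; have [_ /IH[z zs <-]|lt_y _] := leP (modulus y) _.
  by exists z; rewrite // inE zs orbT.
by exists y; rewrite ?inE ?eqxx.
Qed.

Lemma horner_char_poly_mx n (M : 'M[R]_n) t :
  map_mx (horner_eval t) (char_poly_mx M) = t%:M - M.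
Proof.
apply/matrixP => i j; rewrite !mxE /= rmorphB /= rmorphMn /=.
by rewrite !horner_evalE hornerX hornerC.
Qed.

Lemma horner_char_poly n (M : 'M[R]_n) t : (char_poly M).[t] = \det (t%:M - M).
Proof. by rewrite -horner_char_poly_mx det_map_mx. Qed.

Lemma prod_dist_lower_bound (s : seq R[i]) (r t : R) :
  0 <= r <= t -> (forall z, z \in s -> modulus z <= r) ->
  ((t - r) ^+ size s)%:C%C <= \prod_(z <- s) `|t%:C%C - z|.
Proof.
move=> /andP[r0 r_le_t]; elim: s => [|z s IH] s_le_r; first by rewrite big_nil expr0.
rewrite big_cons exprS rmorphM /=; apply: ler_pM.
- by rewrite ler0c subr_ge0.
- by rewrite rmorphXn /= exprn_ge0 // ler0c subr_ge0.
- apply: le_trans (lerB_dist _ _).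
  rewrite /= ger0_norm ?ler0c ?(le_trans r0) // normc_modulus -rmorphB lecR.
  by rewrite lerB // s_le_r // mem_head.
- by apply: IH => y ys; rewrite s_le_r // inE ys orbT.
Qed.

Lemma char_poly_lower_bound n (M : 'M[R]_n) t : spectral_radius M <= t ->
  (t - spectral_radius M) ^+ n <= `|(char_poly M).[t]|.
Proof.
move=> rho_le_t; rewrite -lecR -normc_real -(horner_map (real_complex R)).
rewrite map_char_poly char_poly_mxC horner_prod normr_prod.
under eq_bigr do rewrite hornerXsubC.
have := prod_dist_lower_bound _ (@modulus_le_spectral_radius n M).
by rewrite size_eigenvalues_C spectral_radius_ge0; apply.
Qed.

Lemma unitmx_spectral_radius_lt n (M : 'M[R]_n) t :
  spectral_radius M < t -> t%:M - M \in unitmx.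
Proof.
move=> rho_lt_t; rewrite unitmxE unitfE -horner_char_poly -normr_gt0.
apply: lt_le_trans (char_poly_lower_bound (ltW rho_lt_t)).
by rewrite exprn_gt0 // subr_gt0.
Qed.

End SpectralRadius.

Section Resolvent.
Variable R : realType.

Section ResolventOf.
Variables (n : nat) (M : 'M[R]_n).

Definition resolvent t := invmx (t%:M - M).

Lemma mul_resolvent_mx t : spectral_radius M < t ->
  resolvent t *m (t%:M - M) = 1%:M.
Proof. by move=> /unitmx_spectral_radius_lt; apply: mulVmx. Qed.

Lemma mul_mx_resolvent t : spectral_radius M < t ->
  (t%:M - M) *m resolvent t = 1%:M.
Proof. by move=> /unitmx_spectral_radius_lt; apply: mulmxV. Qed.

Lemma adj_resolvent t : spectral_radius M < t ->
  \adj (t%:M - M) = (char_poly M).[t] *: resolvent t.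
Proof.
move=> rho_lt_t; have := unitmx_spectral_radius_lt rho_lt_t.
rewrite /resolvent /invmx horner_char_poly => unit_t; rewrite unit_t scalerA.
by rewrite mulfV ?scale1r // -unitfE -unitmxE.
Qed.

Lemma resolvent_bounded s T : spectral_radius M < s ->
  exists K, forall t, s <= t <= T -> forall i j, `|resolvent t i j| <= K.
Proof.
move=> rho_lt_s; pose D := (s - spectral_radius M) ^+ n.
have D_gt0 : 0 < D by rewrite exprn_gt0 // subr_gt0.
pose ub (k : 'I_n * 'I_n) := sval (poly_itv_bound (\adj (char_poly_mx M) k.1 k.2) s T).
pose K := \big[Num.max/0]_k ub k.
exists (K / D) => t /andP[s_le_t t_le_T] i j.
have rho_lt_t := lt_le_trans rho_lt_s s_le_t.
have det_gt0 : 0 < `|\det (t%:M - M)|.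
  by rewrite normr_gt0 -unitfE -unitmxE unitmx_spectral_radius_lt.
have D_le_det : D <= `|\det (t%:M - M)|.
  rewrite -horner_char_poly; apply: le_trans (char_poly_lower_bound (ltW rho_lt_t)).
  by rewrite lerXn2r ?nnegrE ?subr_ge0 ?lerB // ltW.
have adj_le : `|\adj (t%:M - M) i j| <= K.
  rewrite -horner_char_poly_mx -map_mx_adj mxE /=.
  apply: le_trans (le_bigmax _ _ (i, j)).
  by rewrite /ub; case: poly_itv_bound => /= ub_ij ->; rewrite ?s_le_t.
rewrite /resolvent /invmx unitmx_spectral_radius_lt // mxE normrM normfV.
rewrite mulrC; apply: ler_pM => //; first by rewrite invr_ge0 ltW.
by rewrite lef_pV2 ?posrE.
Qed.

Lemma resolvent_nonneg_large t : mx_nonneg M -> spectral_radius M < t ->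
  (forall j, \sum_i M i j < t) -> mx_nonneg (resolvent t).
Proof.
move=> M0 rho_lt_t colsum_lt.
have t_gt0 : 0 < t := le_lt_trans (spectral_radius_ge0 M) rho_lt_t.
have -> : resolvent t = t^-1 *: (t *: resolvent t).
  by rewrite scalerA mulVf ?gt_eqF // scale1r.
apply: mx_nonnegZ; first by rewrite invr_ge0 ltW.
apply: (@mx_nonneg_fixpoint _ _ (t^-1 *: M)).
- by apply: mx_nonnegZ; rewrite // invr_ge0 ltW.
- move=> j; under eq_bigr do rewrite mxE.
  by rewrite -mulr_sumr -(mulVf (lt0r_neq0 t_gt0)) ltr_pM2l ?invr_gt0.
- rewrite -scalemxAl -scalemxAr scalerA mulfV ?gt_eqF // scale1r.
  have := mul_resolvent_mx rho_lt_t.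
  by rewrite mulmxBr mul_mx_scalar => <-; rewrite subrK.
Qed.

(* The resolvent identity [R u = R v + (v - u) R u R v] exhibits
   [R u (v - M)] as a fixpoint of [X |-> 1 + X ((v - u) R v)]. *)
Lemma resolvent_nonneg_step u v : spectral_radius M < u -> u <= v ->
  mx_nonneg (resolvent v) -> (forall j, (v - u) * \sum_i resolvent v i j < 1) ->
  mx_nonneg (resolvent u).
Proof.
move=> rho_lt_u u_le_v Rv0 colsum_lt.
have rho_lt_v := lt_le_trans rho_lt_u u_le_v.
set X := resolvent u *m (v%:M - M).
have XRv : X *m resolvent v = resolvent u.
  by rewrite -mulmxA mul_mx_resolvent // mulmx1.
have X_eq : X = 1%:M + (v - u) *: resolvent u.
  rewrite /X; have -> : v%:M - M = (u%:M - M) + (v - u)%:M.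
    by rewrite addrAC -(raddfD (@scalar_mx _ n)) /= (addrC u) subrK.
  by rewrite mulmxDr mul_resolvent_mx // mul_mx_scalar.
rewrite -XRv; apply: mx_nonnegM => //.
apply: (@mx_nonneg_fixpoint _ _ ((v - u) *: resolvent v)).
- by apply: mx_nonnegZ; rewrite // subr_ge0.
- by move=> j; under eq_bigr do rewrite mxE; rewrite -mulr_sumr.
- by rewrite -scalemxAr XRv -X_eq.
Qed.

(* Walk down from [T] in steps [d] small enough for [resolvent_nonneg_step]. *)
Lemma resolvent_nonneg_descent t T K : spectral_radius M < t -> t <= T ->
  (forall u, t <= u <= T + 1 -> forall i j, `|resolvent u i j| <= K) ->
  (forall u, T <= u -> mx_nonneg (resolvent u)) ->
  forall u, t <= u -> mx_nonneg (resolvent u).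
Proof.
move=> rho_lt_t t_le_T K_bound nonneg_T.
pose d := (n%:R * `|K| + 1)^-1.
have nK_ge0 : 0 <= n%:R * `|K| by rewrite mulr_ge0.
have d_gt0 : 0 < d by rewrite invr_gt0; lra.
have d_le1 : d <= 1 by rewrite invr_le1 ?unitfE; lra.
have d_nK : d * (n%:R * `|K|) < 1 by rewrite ltr_pdivrMl ?mulr1; lra.
suff nonneg_k k u : t <= u -> T - k%:R * d <= u -> mx_nonneg (resolvent u).
  move=> u t_le_u; apply: (nonneg_k (Num.bound ((T - t) / d))) => //.
  have : (T - t) / d < (Num.bound ((T - t) / d))%:R.
    by apply/archi_boundP/divr_ge0; [rewrite subr_ge0 | apply: ltW].
  by rewrite ltr_pdivrMr //; lra.
elim: k u => [|k IH] u t_le_u; first by rewrite mul0r subr0; apply: nonneg_T.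
rewrite -natr1 => Tk_le_u; have [|u_lt] := leP (T - k%:R * d) u; first exact: IH.
have kd_ge0 := mulr_ge0 (ler0n R k) (ltW d_gt0).
apply: (@resolvent_nonneg_step _ (u + d)).
- exact: lt_le_trans t_le_u.
- by rewrite lerDl ltW.
- by apply: IH; lra.
move=> j; rewrite addrC addKr; apply: le_lt_trans _ d_nK.
apply: ler_wpM2l; first exact: ltW.
rewrite -[n in n%:R]card_ord -sum1_card natr_sum mulr_suml; apply: ler_sum => i _.
rewrite mul1r (le_trans (ler_norm _)) // (le_trans _ (ler_norm K)) // K_bound //.
by apply/andP; split; lra.
Qed.

Lemma resolvent_nonneg t : mx_nonneg M -> spectral_radius M < t ->
  mx_nonneg (resolvent t).
Proof.
move=> M0 rho_lt_t; have t_gt0 := le_lt_trans (spectral_radius_ge0 M) rho_lt_t.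
pose T := t + \sum_i \sum_j M i j + 1.
have sum_ge0 : 0 <= \sum_i \sum_j M i j by do 2![apply: sumr_ge0 => ? _].
have t_le_T : t <= T by rewrite /T; lra.
have [K K_bound] := resolvent_bounded (T + 1) rho_lt_t.
apply: (resolvent_nonneg_descent rho_lt_t t_le_T K_bound) (lexx t) => u T_le_u.
apply: resolvent_nonneg_large => // [|j].
  exact: lt_le_trans (lt_le_trans rho_lt_t t_le_T) T_le_u.
apply: le_lt_trans (_ : \sum_i \sum_j M i j < u); last by rewrite /T in T_le_u; lra.
apply: ler_sum => i _; rewrite (bigD1 j) //= lerDl.
by apply: sumr_ge0 => l _.
Qed.

End ResolventOf.

Lemma subinvariant_le_spectral_radius n (B : 'M[R]_n) (x : 'cV_n) r :
  mx_nonneg B -> mx_nonneg x -> x != 0 -> mx_nonneg (B *m x - r *: x) ->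
  r <= spectral_radius B.
Proof.
move=> B0 x0 x_neq0 Bx_ge; rewrite leNgt; apply/negP => rho_lt_r.
have x_eq : x = resolvent B r *m ((r%:M - B) *m x).
  by rewrite mulmxA mul_resolvent_mx // mul1mx.
case/eqP: x_neq0; apply: mx_nonneg_antisym => //.
rewrite x_eq -mulmxN; apply: mx_nonnegM; first exact: resolvent_nonneg.
by rewrite mulmxBl mul_scalar_mx opprB.
Qed.

End Resolvent.

Section PerronFrobenius.
Variable R : realType.
Local Notation mxC M := (map_mx (fun x : R => x%:C%C) M).
Local Notation modulus z := (complex.Re `|z|).
Local Notation mx_eval u H := (map_mx (horner_eval u) H).

Lemma poly_ge0_right (p : {poly R}) a :
  (forall t, a < t < a + 1 -> 0 <= p.[t]) -> 0 <= p.[a].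
Proof.
move=> p_ge0; rewrite leNgt; apply/negP => pa_lt0.
have pa_neg : 0 < - p.[a] by rewrite oppr_gt0.
have [d d_gt0 near_a] := poly_cont a p pa_neg.
pose h := Num.min (d / 2) (1 / 2).
have [h_gt0 h_le_d2 h_le_12] : [/\ 0 < h, h <= d / 2 & h <= 1 / 2].
  by rewrite lt_min ge_min lexx ge_min lexx orbT !divr_gt0.
have : `|p.[a + h] - p.[a]| < - p.[a] by rewrite near_a // addrC addKr gtr0_norm //; lra.
move=> /ltr_normlW; have := p_ge0 (a + h); lra.
Qed.

Lemma realcM (a b : R) : (a * b)%:C%C = a%:C%C * b%:C%C :> R[i].
Proof. exact: rmorphM. Qed.

Lemma realc_sum n (F : 'I_n -> R) : (\sum_i F i)%:C%C = \sum_i (F i)%:C%C :> R[i].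
Proof. exact: rmorph_sum. Qed.

Lemma eigenvalue_subinvariant_row n (B : 'M[R]_n) z :
  mx_nonneg B -> z \in eigenvalues_C B ->
  exists w : 'rV_n, [/\ mx_nonneg w, w != 0 & mx_nonneg (w *m B - modulus z *: w)].
Proof.
move=> B0 /eigenvalues_CP[v v_eig v_neq0].
exists (\row_j modulus (v 0 j)); split.
- by move=> i j; rewrite mxE modulus_ge0.
- apply: contraNneq v_neq0 => w0; apply/eqP/rowP => j.
  have := congr1 (fun w : 'rV_n => (w 0 j)%:C%C) w0.
  by rewrite /= !mxE -normc_modulus => /normr0_eq0.
- move=> i j; rewrite !mxE subr_ge0 -lecR realcM -!normc_modulus -normrM.
  have := congr1 (fun u : 'rV_n => u 0 j) v_eig; rewrite !mxE => <-.
  rewrite realc_sum; apply: le_trans (ler_norm_sum _ _ _) _.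
  apply: ler_sum => l _.
  by rewrite !mxE normrM realcM normc_real -normc_modulus (ger0_norm (B0 l j)).
Qed.

Lemma polymx_factor_root m n a (G : 'M[{poly R}]_(m, n)) : G != 0 ->
  exists k (H : 'M_(m, n)), G = ('X - a%:P) ^+ k *: H /\ mx_eval a H != 0.
Proof.
have [s] : exists s, forall k : 'I_m * 'I_n, (size (G k.1 k.2) <= s)%N.
  by exists (\max_k size (G k.1 k.2))%N => k; apply: leq_bigmax.
elim: s G => [|s IH] G size_le G_neq0.
  case/eqP: G_neq0; apply/matrixP => i j; rewrite mxE; apply/eqP.
  by rewrite -size_poly_eq0 -leqn0 (size_le (i, j)).
have [Ga0|Ga_neq0] := eqVneq (mx_eval a G) 0; last first.
  by exists 0%N, G; rewrite expr0 scale1r.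
have root_a i j : ('X - a%:P) %| G i j.
  rewrite dvdp_XsubCl rootE.
  by have := congr1 (fun M : 'M[R]_(m, n) => M i j) Ga0; rewrite !mxE horner_evalE => ->.
pose Q := map_mx (fun p => p %/ ('X - a%:P)) G.
have G_eq : G = ('X - a%:P) *: Q.
  by apply/matrixP => i j; rewrite !mxE mulrC divpK.
have size_Q (k : 'I_m * 'I_n) : (size (Q k.1 k.2) <= s)%N.
  rewrite mxE size_divp ?polyXsubC_eq0 // size_XsubC subn1 /=.
  by have := size_le k; case: (size (G k.1 k.2)).
have Q_neq0 : Q != 0 by apply: contraNneq G_neq0 => Q0; rewrite G_eq Q0 scaler0.
have [k [H [Q_eq Ha_neq0]]] := IH Q size_Q Q_neq0.
by exists k.+1, H; rewrite G_eq Q_eq scalerA exprS.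
Qed.

Lemma exists_col_neq0 m n (A : 'M[R]_(m, n)) : A != 0 -> exists j, col j A != 0.
Proof.
move=> A_neq0; case: (pickP (fun j => col j A != 0)) => [j|cols0]; first by exists j.
case/eqP: A_neq0; apply/matrixP => i j.
by have /negbFE/eqP/matrixP/(_ i 0) := cols0 j; rewrite !mxE.
Qed.

Lemma adjugate_factor_root n (B : 'M[R]_n.+1) r :
  exists k (H : 'M[{poly R}]_n.+1) (e : {poly R}),
  [/\ char_poly_mx B *m H = e%:M, ('X - r%:P) ^+ k * e = char_poly B ^+ 2,
      ('X - r%:P) ^+ k *: H = char_poly B *: \adj (char_poly_mx B)
    & mx_eval r H != 0].
Proof.
set C := char_poly_mx B; set d := char_poly B.
have d_neq0 : d != 0 := monic_neq0 (char_poly_monic B).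
have CG : C *m (d *: \adj C) = (d ^+ 2)%:M.
  by rewrite -scalemxAr mul_mx_adj scale_scalar_mx expr2.
have G_neq0 : d *: \adj C != 0.
  apply: contra_eq_neq CG => ->; rewrite mulmx0; apply/eqP/matrixP.
  by move=> /(_ 0 0); rewrite !mxE mulr1n => /eqP; rewrite eq_sym expf_eq0 (negPf d_neq0) andbF.
have [k [H [G_eq Hr_neq0]]] := polymx_factor_root r G_neq0.
have Xk_neq0 : ('X - r%:P) ^+ k != 0 by rewrite expf_neq0 // polyXsubC_eq0.
have XkCH : ('X - r%:P) ^+ k *: (C *m H) = (d ^+ 2)%:M by rewrite scalemxAr -G_eq.
exists k, H, ((C *m H) 0 0); split => //; last first.
  by have := congr1 (fun M : 'M_n.+1 => M 0 0) XkCH; rewrite !mxE eqxx !mulr1n.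
apply/matrixP => i j; apply: (mulfI Xk_neq0).
have := congr1 (fun M : 'M_n.+1 => M i j) XkCH; rewrite !mxE => ->.
have := congr1 (fun M : 'M_n.+1 => M 0 0) XkCH; rewrite !mxE eqxx !mulr1n => <-.
by rewrite mulrnAr.
Qed.

(* With [chi(X) adj(X - B) = (X - r)^k H(X)], the matrix [H(u)] is a positive
   multiple of the resolvent for [u > r], whence [H(r) >= 0] by continuity. *)
Lemma perron_adjugate_limit n (B : 'M[R]_n.+1) : mx_nonneg B ->
  exists H : 'M_n.+1, exists2 e : R,
    [/\ mx_nonneg H, H != 0 & 0 <= e] & ((spectral_radius B)%:M - B) *m H = e%:M.
Proof.
move=> B0; set r := spectral_radius B.
have [k [H [e [CH Xk_e Xk_H Hr_neq0]]]] := adjugate_factor_root B r.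
have Xk_gt0 u : r < u -> 0 < (u - r) ^+ k by move=> r_lt_u; rewrite exprn_gt0 // subr_gt0.
have Hu_nonneg u : r < u -> mx_nonneg (mx_eval u H).
  move=> r_lt_u; have := congr1 (map_mx (horner_eval u)) Xk_H.
  rewrite !map_mxZ /= !horner_evalE horner_exp hornerXsubC map_mx_adj.
  rewrite horner_char_poly_mx adj_resolvent // scalerA.
  move=> /(canRL (scalerK (lt0r_neq0 (Xk_gt0 u r_lt_u)))) ->; rewrite scalerA.
  apply: mx_nonnegZ; last exact: resolvent_nonneg.
  by apply: mulr_ge0; rewrite ?invr_ge0 ?(ltW (Xk_gt0 u r_lt_u)) // -expr2 sqr_ge0.
have eu_ge0 u : r < u -> 0 <= e.[u].
  move=> r_lt_u; have := congr1 (horner^~ u) Xk_e.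
  rewrite hornerM horner_exp hornerXsubC => eq_u.
  by rewrite -(pmulr_rge0 _ (Xk_gt0 u r_lt_u)) eq_u horner_exp sqr_ge0.
exists (mx_eval r H), (e.[r]); first split => //.
- move=> i j; rewrite mxE /= horner_evalE; apply: poly_ge0_right => u /andP[r_lt_u _].
  by have := Hu_nonneg u r_lt_u i j; rewrite mxE.
- by apply: poly_ge0_right => u /andP[r_lt_u _]; apply: eu_ge0.
by rewrite -horner_char_poly_mx -map_mxM CH map_scalar_mx.
Qed.

(* The subinvariant row of a dominant eigenvalue forces [e = 0], so every
   nonzero column of [H] is an eigenvector. *)
Lemma perron_eigenvector n (B : 'M[R]_n) : mx_nonneg B -> 0 < spectral_radius B ->
  exists2 x : 'cV_n, mx_nonneg x /\ x != 0 & B *m x = spectral_radius B *: x.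
Proof.
case: n B => [|n] B B0 rho_gt0.
  move: rho_gt0; rewrite /spectral_radius.
  by case: (eigenvalues_C B) (size_eigenvalues_C B) => // _; rewrite big_nil ltxx.
have [H [e [H0 H_neq0 e_ge0] BH]] := perron_adjugate_limit B0.
set r := spectral_radius B in rho_gt0 BH *.
have [z z_eig z_mod] := spectral_radius_attained rho_gt0.
have [w [w0 w_neq0]] := eigenvalue_subinvariant_row B0 z_eig; rewrite z_mod -/r => wB.
have e0 : e = 0.
  have ew : e *: w = - ((w *m B - r *: w) *m H).
    by rewrite -mul_mx_scalar -BH mulmxA mulmxBr mul_mx_scalar -[r *: w - _]opprB mulNmx.
  have : e *: w = 0.
    apply: mx_nonneg_antisym; first exact: mx_nonnegZ.
    by rewrite ew opprK; apply: mx_nonnegM.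
  by move/eqP; rewrite scalemx_eq0 (negPf w_neq0) orbF => /eqP.
have [j Hj_neq0] := exists_col_neq0 H_neq0.
exists (col j H); first by split => // i l; rewrite /col mxE.
apply/eqP; rewrite eq_sym -subr_eq0 -mul_scalar_mx -mulmxBl colE mulmxA.
by rewrite BH e0 raddf0 mul0mx.
Qed.

End PerronFrobenius.

Section ProperSplittings.
Variable R : realType.

Lemma same_null_sym m n (A P : 'M[R]_(m, n)) : same_null A P -> same_null P A.
Proof. by move=> AP x; rewrite AP. Qed.

Lemma same_range_sym m n (A P : 'M[R]_(m, n)) : same_range A P -> same_range P A.
Proof. by move=> AP y; rewrite AP. Qed.

Lemma col_matrixP m n (A B : 'M[R]_(m, n)) : (forall j, col j A = col j B) -> A = B.
Proof.
move=> eq_col; apply/matrixP => i j.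
by have := congr1 (fun x : 'cV_m => x i 0) (eq_col j); rewrite !mxE.
Qed.

Lemma same_null_mulmx m n p (A P : 'M[R]_(m, n)) (M : 'M[R]_(n, p)) :
  same_null A P -> P *m M = 0 -> A *m M = 0.
Proof.
move=> AP PM0; apply: col_matrixP => j; rewrite colE -mulmxA -colE [RHS]colE mul0mx.
by apply/AP; rewrite colE mulmxA PM0 mul0mx.
Qed.

Lemma same_range_proj m n (A P : 'M[R]_(m, n)) (Pd : 'M[R]_(n, m)) :
  same_range A P -> P *m Pd *m P = P -> P *m Pd *m A = A.
Proof.
move=> AP PPdP; apply: col_matrixP => j.
have [x Aj] : exists x, col j A = P *m x by apply/AP; exists (delta_mx j 0); rewrite colE.
by rewrite colE -mulmxA -colE Aj mulmxA PPdP.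
Qed.

Lemma same_null_proj m n (A P : 'M[R]_(m, n)) (Pd : 'M[R]_(n, m)) :
  same_null A P -> P *m Pd *m P = P -> A *m (Pd *m P) = A.
Proof.
move=> AP PPdP; apply/eqP; rewrite -subr_eq0 -{2}[A]mulmx1 -mulmxBr.
by apply/eqP/(same_null_mulmx AP); rewrite mulmxBr mulmx1 mulmxA PPdP subrr.
Qed.

(* Two matrices with the same range and null space share the orthogonal
   projectors onto them, which are [A A^+] and [A^+ A]. *)
Lemma MP_inverse_proj m n (A P : 'M[R]_(m, n)) (Ad Pd : 'M[R]_(n, m)) :
  is_MP_inverse A Ad -> is_MP_inverse P Pd -> same_range A P -> same_null A P ->
  Pd *m P = Ad *m A /\ P *m Pd = A *m Ad.
Proof.
move=> [AAdA AdAAd AAd_sym AdA_sym] [PPdP PdPPd PPd_sym PdP_sym] AP_range AP_null.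
have AdA_PdP : Ad *m A *m (Pd *m P) = Ad *m A by rewrite -mulmxA same_null_proj.
have PdP_AdA : Pd *m P *m (Ad *m A) = Pd *m P.
  by rewrite -mulmxA (same_null_proj (same_null_sym AP_null)).
have PPd_AAd : P *m Pd *m (A *m Ad) = A *m Ad by rewrite mulmxA same_range_proj.
have AAd_PPd : A *m Ad *m (P *m Pd) = P *m Pd.
  by rewrite mulmxA (same_range_proj (same_range_sym AP_range)).
split.
  by rewrite -[RHS]AdA_sym -AdA_PdP trmx_mul PdP_sym AdA_sym PdP_AdA.
by rewrite -[RHS]AAd_sym -PPd_AAd trmx_mul AAd_sym PPd_sym AAd_PPd.
Qed.

Section Splitting.
Variables (m n : nat) (A P Rm S : 'M[R]_(m, n)) (Ad Pd : 'M[R]_(n, m)).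
Hypotheses (A_MP : is_MP_inverse A Ad) (P_MP : is_MP_inverse P Pd)
  (splitAP : proper_double_splitting A P Rm S).

Lemma splitting_remainder : Rm - S = P - A.
Proof. by case: splitAP => -> _ _; apply/matrixP => i j; rewrite !mxE; ring. Qed.

Lemma splitting_proj : Pd *m P = Ad *m A /\ P *m Pd = A *m Ad.
Proof. by case: splitAP => _ AP_range AP_null; apply: MP_inverse_proj. Qed.

Lemma splitting_iteration_sum : Pd *m Rm - Pd *m S = (Ad - Pd) *m A.
Proof.
by rewrite -mulmxBr splitting_remainder mulmxBr mulmxBl (proj1 splitting_proj).
Qed.

Lemma splitting_iteration_sum_MP : Ad - Pd *m (Rm - S) *m Ad = Pd.
Proof.
case: A_MP => _ AdAAd _ _; case: P_MP => _ PdPPd _ _.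
rewrite mulmxBr splitting_iteration_sum !mulmxBl AdAAd -[Pd *m A *m Ad]mulmxA.
by rewrite -(proj2 splitting_proj) mulmxA PdPPd opprB addrC subrK.
Qed.

Lemma splitting_proj_remainder : P *m Pd *m (Rm - S) = Rm - S.
Proof.
case: A_MP => AAdA _ _ _; case: P_MP => PPdP _ _ _.
by rewrite splitting_remainder mulmxBr PPdP (proj2 splitting_proj) AAdA.
Qed.

Lemma regular_splitting_mulmx_nonneg (v : 'cV[R]_n) r :
  mx_nonneg (P *m Pd) -> mx_nonneg Rm -> mx_nonneg (- S) -> 0 < r <= 1 ->
  mx_nonneg v -> (r *: (Pd *m Rm) - Pd *m S) *m v = r ^+ 2 *: v ->
  mx_nonneg (A *m v).
Proof.
move=> PPd0 Rm0 NS0 /andP[r_gt0 r_le1] v0 eig.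
have A_eq : A = P - (Rm - S) by rewrite splitting_remainder opprB addrC subrK.
have PdXv : Pd *m ((r *: Rm - S) *m v) = r ^+ 2 *: v.
  by rewrite mulmxA mulmxBr -scalemxAr eig.
have lin : (r - r ^+ 2) *: Rm + (1 - r ^+ 2) *: - S = (r *: Rm - S) - r ^+ 2 *: (Rm - S).
  by apply/matrixP => i j; rewrite !mxE; ring.
have key : r ^+ 2 *: (A *m v) =
    P *m Pd *m (((r - r ^+ 2) *: Rm + (1 - r ^+ 2) *: - S) *m v).
  rewrite lin mulmxBl -scalemxAl mulmxBr -scalemxAr -[P *m Pd *m _]mulmxA PdXv.
  by rewrite mulmxA splitting_proj_remainder -scalemxAr -scalerBr -mulmxBl -A_eq.
have r2_gt0 : 0 < r ^+ 2 by rewrite exprn_gt0.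
have : mx_nonneg (r ^+ 2 *: (A *m v)).
  rewrite key; apply/mx_nonnegM/mx_nonnegM => //.
  by apply: mx_nonnegD; apply: mx_nonnegZ; rewrite // subr_ge0 expr2; nra.
by move=> Av0 i j; have := Av0 i j; rewrite mxE pmulr_rge0.
Qed.

End Splitting.

End ProperSplittings.

Section Companion.
Variable R : realType.

Section CompanionMatrices.
Variable n : nat.
Implicit Types (X Y : 'M[R]_n).

Definition companion_mx X Y : 'M[R]_(n + n) := block_mx X Y 1%:M 0.

Lemma mx_nonneg_companion X Y :
  mx_nonneg X -> mx_nonneg Y -> mx_nonneg (companion_mx X Y).
Proof. by move=> X0 Y0; apply: mx_nonneg_block => //; [apply: mx_nonneg1 | apply: mx_nonneg0]. Qed.

Lemma companion_mx_mulmx X Y (u v : 'cV_n) :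
  companion_mx X Y *m col_mx u v = col_mx (X *m u + Y *m v) u.
Proof. by rewrite mul_block_col mul1mx mul0mx addr0. Qed.

Lemma mulmx_companion_mx X Y (w1 w2 : 'rV_n) :
  row_mx w1 w2 *m companion_mx X Y = row_mx (w1 *m X + w2) (w1 *m Y).
Proof. by rewrite mul_row_block mulmx1 mulmx0 addr0. Qed.

Lemma companion_spectral_radius_lt1 X Y : mx_nonneg X -> mx_nonneg Y ->
  (forall w : 'rV_n, mx_nonneg w -> mx_nonneg (w *m (X + Y) - w) -> w = 0) ->
  spectral_radius (companion_mx X Y) < 1.
Proof.
move=> X0 Y0 no_fixed; apply: spectral_radius_lt => // z z_eig.
rewrite ltNge; apply/negP => z_ge1.
have [w [w0 w_neq0 wW]] := eigenvalue_subinvariant_row (mx_nonneg_companion X0 Y0) z_eig.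
move: w0 w_neq0 wW; rewrite -[w]hsubmxK mulmx_companion_mx scale_row_mx opp_row_mx add_row_mx.
set w1 := lsubmx w; set w2 := rsubmx w.
move=> /mx_nonneg_row_mx[w10 w20] w_neq0 /mx_nonneg_row_mx[wX wY].
have {}wX := mx_nonneg_subZ w10 z_ge1 wX; have {}wY := mx_nonneg_subZ w20 z_ge1 wY.
have w1_eq0 : w1 = 0.
  apply: no_fixed => //; have -> : w1 *m (X + Y) - w1 = (w1 *m X + w2 - w1) + (w1 *m Y - w2).
    by rewrite mulmxDr; apply/matrixP => i j; rewrite !mxE; ring.
  exact: mx_nonnegD.
have w2_eq0 : w2 = 0.
  by apply: mx_nonneg_antisym => //; move: wY; rewrite w1_eq0 mul0mx sub0r.
by move: w_neq0; rewrite w1_eq0 w2_eq0 row_mx0 eqxx.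
Qed.

Lemma companion_eigenvector X Y (u v : 'cV_n) r :
  companion_mx X Y *m col_mx u v = r *: col_mx u v ->
  u = r *: v /\ (r *: X + Y) *m v = r ^+ 2 *: v.
Proof.
rewrite companion_mx_mulmx scale_col_mx => /eq_col_mx[XY_u u_eq]; split => //.
by rewrite mulmxDl -scalemxAl scalemxAr -u_eq XY_u u_eq scalerA expr2.
Qed.

Lemma companion_subinvariant X1 Y1 X2 Y2 (v : 'cV_n) r : 0 <= r <= 1 ->
  mx_nonneg v -> mx_nonneg ((X2 + Y2 - (X1 + Y1)) *m v) ->
  mx_nonneg (X1 - X2) \/ mx_nonneg (Y2 - Y1) ->
  (r *: X1 + Y1) *m v = r ^+ 2 *: v ->
  mx_nonneg (companion_mx X2 Y2 *m col_mx (r *: v) v - r *: col_mx (r *: v) v).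
Proof.
move=> /andP[r_ge0 r_le1] v0 diff0 X12_or_Y21 eig.
rewrite companion_mx_mulmx scale_col_mx opp_col_mx add_col_mx subrr.
apply/mx_nonneg_col_mx; split; last exact: mx_nonneg0.
have -> : X2 *m (r *: v) + Y2 *m v - r *: (r *: v) = (r *: X2 + Y2 - (r *: X1 + Y1)) *m v.
  by rewrite mulmxBl eig mulmxDl -scalemxAl -scalemxAr scalerA expr2.
have r1_ge0 : 0 <= 1 - r by rewrite subr_ge0.
case: X12_or_Y21 => [X12|Y21].
  have -> : r *: X2 + Y2 - (r *: X1 + Y1) = (X2 + Y2 - (X1 + Y1)) + (1 - r) *: (X1 - X2).
    by apply/matrixP => i j; rewrite !mxE; ring.
  by rewrite mulmxDl -scalemxAl; apply: mx_nonnegD => //; apply/mx_nonnegZ/mx_nonnegM.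
have -> : r *: X2 + Y2 - (r *: X1 + Y1) = r *: (X2 + Y2 - (X1 + Y1)) + (1 - r) *: (Y2 - Y1).
  by apply/matrixP => i j; rewrite !mxE; ring.
by rewrite mulmxDl -!scalemxAl; apply: mx_nonnegD; apply: mx_nonnegZ => //; apply: mx_nonnegM.
Qed.

(* Test the Perron vector [(r v, v)] of the first matrix against the second. *)
Lemma companion_spectral_radius_le X1 Y1 X2 Y2 :
  mx_nonneg X1 -> mx_nonneg Y1 -> mx_nonneg X2 -> mx_nonneg Y2 ->
  spectral_radius (companion_mx X1 Y1) <= 1 ->
  mx_nonneg (X1 - X2) \/ mx_nonneg (Y2 - Y1) ->
  (forall (v : 'cV_n) r, 0 < r <= 1 -> mx_nonneg v ->
     (r *: X1 + Y1) *m v = r ^+ 2 *: v -> mx_nonneg ((X2 + Y2 - (X1 + Y1)) *m v)) ->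
  spectral_radius (companion_mx X1 Y1) <= spectral_radius (companion_mx X2 Y2).
Proof.
move=> X10 Y10 X20 Y20 r_le1 X12_or_Y21 diff0.
set r := spectral_radius _ in r_le1 *.
have [r_le0|r_gt0] := leP r 0; first exact: le_trans r_le0 (spectral_radius_ge0 _).
have [x [x0 x_neq0] W1x] := perron_eigenvector (mx_nonneg_companion X10 Y10) r_gt0.
move: x0 x_neq0 W1x; rewrite -[x]vsubmxK.
move=> x0 x_neq0 /companion_eigenvector[x_eq eig].
rewrite x_eq in x0 x_neq0; have v0 : mx_nonneg (dsubmx x) by case/mx_nonneg_col_mx: x0.
apply: subinvariant_le_spectral_radius (mx_nonneg_companion X20 Y20) x0 x_neq0 _.
have r_01 : 0 < r <= 1 by rewrite r_gt0 r_le1.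
apply: companion_subinvariant (eig); [by rewrite (ltW r_gt0) r_le1 | exact: v0 | | exact: X12_or_Y21].
exact: diff0 r_01 v0 eig.
Qed.

End CompanionMatrices.

Lemma no_subinvariant_row m n (Ad Pd : 'M[R]_(n, m)) (N : 'M[R]_(m, n)) :
  mx_nonneg Ad -> mx_nonneg Pd -> Ad - Pd *m N *m Ad = Pd ->
  forall w : 'rV_n, mx_nonneg w -> mx_nonneg (w *m (Pd *m N) - w) -> w = 0.
Proof.
move=> Ad0 Pd0 Pd_eq w w0 wG.
have wPd0 : w *m Pd = 0.
  apply: mx_nonneg_antisym; first exact: mx_nonnegM.
  rewrite -{1}Pd_eq mulmxBr opprB !mulmxA -mulmxBl -[w *m Pd *m N]mulmxA.
  exact: mx_nonnegM.
by apply: mx_nonneg_antisym => //; move: wG; rewrite mulmxA wPd0 mul0mx sub0r.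
Qed.

Lemma weak_regular_splitting_convergent m n (A P Rm S : 'M[R]_(m, n))
    (Ad Pd : 'M[R]_(n, m)) :
  is_MP_inverse A Ad -> mx_nonneg Ad ->
  proper_double_splitting A P Rm S -> is_MP_inverse P Pd ->
  mx_nonneg Pd -> mx_nonneg (Pd *m Rm) -> mx_nonneg (- (Pd *m S)) ->
  spectral_radius (companion_mx (Pd *m Rm) (- (Pd *m S))) < 1.
Proof.
move=> A_MP Ad0 splitAP P_MP Pd0 X0 Y0.
apply: companion_spectral_radius_lt1 => //; rewrite -mulmxBr.
apply: no_subinvariant_row => //.
exact: splitting_iteration_sum_MP A_MP P_MP splitAP.
Qed.

End Companion.

Theorem theorem3p1 (R : realType) (m n : nat)
  (A : 'M[R]_(m, n)) (Ad : 'M[R]_(n, m))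
  (P1 R1 S1 : 'M[R]_(m, n)) (P1d : 'M[R]_(n, m))
  (P2 R2 S2 : 'M[R]_(m, n)) (P2d : 'M[R]_(n, m)) :
  is_MP_inverse A Ad -> mx_nonneg Ad ->
  (* A = P1 - R1 + S1 regular proper double splitting, with P1 P1^+ >= 0 *)
  proper_double_splitting A P1 R1 S1 -> is_MP_inverse P1 P1d ->
  mx_nonneg P1d -> mx_nonneg R1 -> mx_nonneg (- S1) ->
  mx_nonneg (P1 *m P1d) ->
  (* A = P2 - R2 + S2 weak regular proper double splitting *)
  proper_double_splitting A P2 R2 S2 -> is_MP_inverse P2 P2d ->
  mx_nonneg P2d -> mx_nonneg (P2d *m R2) -> mx_nonneg (- (P2d *m S2)) ->
  (* comparison hypotheses *)
  mx_nonneg (P1d - P2d) ->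
  (mx_nonneg (P1d *m R1 - P2d *m R2) \/ mx_nonneg (P1d *m S1 - P2d *m S2)) ->
  let W1 : 'M[R]_(n + n) := block_mx (P1d *m R1) (- (P1d *m S1)) 1%:M 0 in
  let W2 : 'M[R]_(n + n) := block_mx (P2d *m R2) (- (P2d *m S2)) 1%:M 0 in
  spectral_radius W1 <= spectral_radius W2 /\ spectral_radius W2 < 1.
Proof.
move=> A_MP Ad0 split1 P1_MP P1d0 R10 S10 PP10 split2 P2_MP P2d0 X20 Y20 P12 cmp W1 W2.
have -> : W1 = companion_mx (P1d *m R1) (- (P1d *m S1)) by [].
have -> : W2 = companion_mx (P2d *m R2) (- (P2d *m S2)) by [].
have X10 : mx_nonneg (P1d *m R1) := mx_nonnegM P1d0 R10.
have Y10 : mx_nonneg (- (P1d *m S1)) by rewrite -mulmxN; apply: mx_nonnegM.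
split; last exact: weak_regular_splitting_convergent A_MP Ad0 split2 P2_MP P2d0 X20 Y20.
apply: companion_spectral_radius_le; [exact: X10 | exact: Y10 | exact: X20 | exact: Y20 | | |].
- exact/ltW/(weak_regular_splitting_convergent A_MP Ad0 split1 P1_MP P1d0 X10 Y10).
- by case: cmp => [|PS12]; [left | right; rewrite opprK addrC].
move=> v r r_01 v0 eig.
rewrite (splitting_iteration_sum A_MP P1_MP split1) (splitting_iteration_sum A_MP P2_MP split2).
rewrite -mulmxBl opprB addrC addrA subrK -mulmxA; apply: mx_nonnegM; first exact: P12.
exact: (regular_splitting_mulmx_nonneg A_MP P1_MP split1 PP10 R10 S10 r_01 v0 eig).
Qed.
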